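(* Let $(\rho_t,\Phi_t)_t$ be smooth with $\rho_t>0$ probability densities on $\Omega$ satisfying $\partial_t\rho_t=(\Phi_t-\mathbb{E}_{\rho_t}[\Phi_t])\rho_t$, let $\rho^*>0$ be a fixed smooth probability density with $\rho_t\ne\rho^*$, and set $R_t=\sqrt{\rho_t}$, $R^*=\sqrt{\rho^*}$, $H_t=\cos^{-1}\big(\int R_tR^*dx\big)$, $T_t=\frac{2H_t}{\sin H_t}\frac{R^*-R_t\cos H_t}{R_t}$, and $\mathcal F_t[\Psi]=\Psi-\mathbb{E}_{R_t^2}[\Psi]$. Then $$\int(\partial_tT_t)\mathcal F_t[\Phi_t]R_t^2dx+\frac12\int T_t(\mathcal F_t[\Phi_t])^2R_t^2dx\ge-\int(\mathcal F_t[\Phi_t])^2R_t^2dx,$$ $$\int(\partial_tT_t)T_tR_t^2dx=-\int T_t\Phi_tR_t^2dx-\frac12\int T_t^2\mathcal F_t[\Phi_t]R_t^2dx.$$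
   Context: $\mathbb{E}_\rho[\Psi]=\int\Psi\rho\,dx$. *)

From HB Require Import structures.
From mathcomp Require Import all_boot all_order all_algebra.
From mathcomp Require Import all_classical all_reals all_analysis.
Set Implicit Arguments. Unset Strict Implicit. Unset Printing Implicit Defensive.
Import Order.TTheory GRing.Theory Num.Theory.
Import numFieldNormedType.Exports.
Local Open Scope classical_set_scope.
Local Open Scope ring_scope.

(* Omega is a measurable set D in a measure space
   (T, mu); "dx" is integration against mu (Lebesgue measure in the paper). *)

Section Defs.
Context {d : measure_display} {T : measurableType d} {R : realType}
        (mu : {measure set T -> \bar R}) (D : set T).

Definition pos_density (f : T -> R) : Prop :=
  [/\ measurable_fun D f, (forall x, D x -> 0 < f x),
      mu.-integrable D (fun x => (f x)%:E) & \int[mu]_(x in D) f x = 1].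

Definition expect (rho Psi : T -> R) : R := \int[mu]_(x in D) (Psi x * rho x).

Definition Rt (rho : R -> T -> R) (t : R) (x : T) : R := Num.sqrt (rho t x).

Definition Hang (rho : R -> T -> R) (rhos : T -> R) (t : R) : R :=
  acos (\int[mu]_(x in D) (Rt rho t x * Num.sqrt (rhos x))).

Definition Tfun (rho : R -> T -> R) (rhos : T -> R) (t : R) (x : T) : R :=
  let H := Hang rho rhos t in
  (2 * H / sin H) * ((Num.sqrt (rhos x) - Rt rho t x * cos H) / Rt rho t x).

Definition Fcent (rho : R -> T -> R) (t : R) (Psi : T -> R) (x : T) : R :=
  Psi x - expect (fun y => Rt rho t y ^+ 2) Psi.

End Defs.

From HB Require Import structures.
From mathcomp Require Import all_boot all_order all_algebra.
From mathcomp Require Import all_classical all_reals all_analysis.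
From mathcomp Require Import ring lra measurable_realfun lebesgue_integral_under.
Set Implicit Arguments. Unset Strict Implicit. Unset Printing Implicit Defensive.
Import Order.TTheory GRing.Theory Num.Theory.
Import numFieldNormedType.Exports.
Local Open Scope classical_set_scope.
Local Open Scope ring_scope.

(** With [R = sqrt rho_t], [S = sqrt rho^*] and [F = F_t[Phi_t]], the function
    [T_t R = (2 H / sin H) (S - R cos H)] is twice the logarithm map at [R] of
    the unit sphere of [L^2] towards [S], and [cos H = \int R S].  Since
    [d/dt R = F R / 2] and [d/dt H = - P / (2 sin H)] with [P = \int R S F],
    every integral of the statement is a linear combination of the moments
    [\int R^2 F = 0], [P], [Q = \int R^2 F^2], [\int R S F^2], [\int S^2 F].
    The identity is then algebra, and the left side minus the right side of
    the inequality equals [(sin H - H cos H) (Q sin^2 H - P^2) / sin^3 H].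
    Both factors are nonnegative: [H cos H <= sin H] on [[0, pi]], and
    [P = \int R F (S - R cos H)] with [\int (S - R cos H)^2 = sin^2 H], so
    [P^2 <= Q sin^2 H] by Cauchy-Schwarz.  Finally [sin H > 0] because
    [\int (R - S)^2 = 2 - 2 cos H] vanishes only if [rho_t = rho^*] a.e. *)

Lemma sqrt_mul_le_add (R : rcfType) (a b : R) : 0 <= a -> 0 <= b ->
  Num.sqrt a * Num.sqrt b <= a + b.
Proof.
move=> a_ge0 b_ge0; rewrite -{2}(sqr_sqrtr a_ge0) -{2}(sqr_sqrtr b_ge0).
have := sqrtr_ge0 a; have := sqrtr_ge0 b; nra.
Qed.

Lemma normr_le_1Dsqr (R : realDomainType) (y : R) : `|y| <= 1 + y ^+ 2.
Proof.
rewrite -real_normK ?num_real //; have := normr_ge0 y; have := sqr_ge0 (`|y| - 1).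
nra.
Qed.

Lemma ler_1DsqrB (R : realDomainType) (a b : R) :
  1 + (a - b) ^+ 2 <= (2 + 2 * b ^+ 2) * (1 + a ^+ 2).
Proof. have := sqr_ge0 (a + b); have := sqr_ge0 (a * b); nra. Qed.

Lemma quadratic_ge0_discriminant (R : realFieldType) (a b c : R) : 0 <= a ->
  (forall l, 0 <= l ^+ 2 * a - 2 * l * b + c) -> b ^+ 2 <= a * c.
Proof.
move=> a_ge0 q_ge0; have [a_gt0|a_le0] := ltP 0 a.
  have := q_ge0 (b / a).
  have -> : (b / a) ^+ 2 * a - 2 * (b / a) * b + c = (a * c - b ^+ 2) / a.
    by field; rewrite gt_eqF.
  by rewrite pmulr_lge0 ?invr_gt0 // subr_ge0.
have a0 : a = 0 by apply/eqP; rewrite eq_le a_le0 a_ge0.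
subst a; have [->|b_neq0] := eqVneq b 0; first by rewrite expr0n mul0r.
have := q_ge0 ((c + 1) / (2 * b)).
have -> : ((c + 1) / (2 * b)) ^+ 2 * 0 - 2 * ((c + 1) / (2 * b)) * b + c = -1.
  by field; rewrite b_neq0.
by rewrite ler0N1.
Qed.

Lemma mul_cos_le_sin (R : realType) (h : R) : 0 <= h <= pi -> h * cos h <= sin h.
Proof.
case/andP=> h_ge0 h_lepi.
pose f (x : R) := sin x - x * cos x.
have df (x : R) : is_derive x (1 : R) f (x * sin x).
  by apply: is_derive_eq; rewrite /GRing.scale /=; ring.
have := @ger0_derive1_le_cc R f 0 pi _ _ _ 0 h.
rewrite /f sin0 mul0r subr0 subr_ge0; apply.
- by move=> x _; exact: (@ex_derive _ _ _ _ _ _ _ (df x)).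
- move=> x; rewrite in_itv /= => /andP[x_gt0 x_ltpi].
  rewrite derive1E derive_val; apply: mulr_ge0; first exact: ltW.
  by apply: sin_ge0_pi; rewrite !ltW.
- apply: continuous_subspaceT => x; apply: differentiable_continuous.
  exact/derivable1_diffP/(@ex_derive _ _ _ _ _ _ _ (df x)).
- by rewrite in_itv /= lexx pi_ge0.
- by rewrite in_itv /= h_ge0.
- exact: h_ge0.
Qed.

(* Pointwise, [T_t] has this shape with [H = H_t], [r = R_t] and [a = R^*]. *)
Lemma is_derive_logmap (R : realType) (H r : R -> R) (a t dH dr : R) :
  is_derive t 1 H dH -> is_derive t 1 r dr -> sin (H t) != 0 -> r t != 0 ->
  is_derive t 1 (fun s => 2 * H s / sin (H s) * ((a - r s * cos (H s)) / r s))
   ((2 * dH / sin (H t) - 2 * H t * cos (H t) * dH / sin (H t) ^+ 2)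
      * ((a - r t * cos (H t)) / r t)
    + 2 * H t / sin (H t) * (sin (H t) * dH - a * dr / r t ^+ 2)).
Proof.
move=> dH_ dr_ sin_neq0 r_neq0.
have dsin : is_derive t 1 (fun s => sin (H s)) (cos (H t) * dH) :=
  is_derive1_comp (is_derive_sin _) dH_.
have dcos : is_derive t 1 (fun s => cos (H s)) (- sin (H t) * dH) :=
  is_derive1_comp (is_derive_cos _) dH_.
have dinvsin := @is_deriveV _ (fun s => sin (H s)) t _ 1 sin_neq0 dsin.
have dinvr := @is_deriveV _ r t _ 1 r_neq0 dr_.
(* the [have]s above are found by instance resolution in [is_derive_eq] *)
apply: is_derive_eq; rewrite /GRing.scale /=.
by field; rewrite sin_neq0 r_neq0.
Qed.

Lemma measurable_fun_sqrt d (T : measurableType d) (R : realType) (D : set T)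
    (f : T -> R) :
  measurable_fun D f -> measurable_fun D (fun x => Num.sqrt (f x)).
Proof. exact: measurableT_comp (continuous_measurable_fun (@sqrt_continuous R)). Qed.

Lemma Rintegral_ge0_eq0 d (T : measurableType d) (R : realType)
    (mu : {measure set T -> \bar R}) (D : set T) (f : T -> R) :
  measurable D -> mu.-integrable D (EFin \o f) -> (forall x, D x -> 0 <= f x) ->
  \int[mu]_(x in D) f x = 0 -> {ae mu, forall x, D x -> f x = 0}.
Proof.
move=> mD f_int f_ge0 f_int0.
have f_eint0 : (\int[mu]_(x in D) (f x)%:E = 0)%E.
  by rewrite -(fineK (integrable_fin_num mD f_int)) -/(Rintegral _ _ _) f_int0.
have : (\int[mu]_(x in D) `|(EFin \o f) x| = 0)%E.
  rewrite -f_eint0; apply: eq_integral => x /[!inE] Dx /=.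
  by rewrite ger0_norm // f_ge0.
move/(ae_eq_integral_abs mu mD (measurable_int mu f_int)).
by apply: filterS => x /= fx0 Dx; have := fx0 Dx => -[].
Qed.

Lemma open_itv_subset (R : realType) (I : set R) (t e : R) : open I -> I t -> 0 < e ->
  exists2 del : R, 0 < del &
    forall s, `](t - del), (t + del)[%classic s -> I s /\ `|s - t| < e.
Proof.
move=> oI It e_gt0; have /nbhs_ballP[e1 /= e1_gt0 e1I] := oI t It.
exists (Num.min e e1) => [|s]; first by rewrite lt_min e_gt0 e1_gt0.
rewrite /= in_itv /= => /andP[ts st].
have : `|s - t| < Num.min e e1 by rewrite ltr_norml; apply/andP; split; lra.
rewrite lt_min => /andP[se se1]; split => //.
by apply: e1I; rewrite /ball /= distrC.
Qed.

Section density_path.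
Context {d : measure_display} {T : measurableType d} {R : realType}
  (mu : {measure set T -> \bar R}) (D : set T) (I : set R)
  (rho Phi : R -> T -> R) (rhos : T -> R).
Hypothesis mD : measurable D.
Hypothesis oI : open I.
Hypothesis rho_density : forall t, I t -> pos_density mu D (rho t).
Hypothesis rhos_density : pos_density mu D rhos.
Hypothesis mPhi : forall t, I t -> measurable_fun D (Phi t).
Hypothesis Phi2_rho_int :
  forall t, I t -> mu.-integrable D (fun x => ((Phi t x) ^+ 2 * rho t x)%:E).
Hypothesis Phi2_rhos_int :
  forall t, I t -> mu.-integrable D (fun x => ((Phi t x) ^+ 2 * rhos x)%:E).
Hypothesis rho_flow : forall t x, I t -> D x ->
  is_derive t 1 (fun s => rho s x)
    ((Phi t x - expect mu D (rho t) (Phi t)) * rho t x).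
Hypothesis overlap_flow_dominated : forall t, I t -> exists2 e : R, 0 < e &
  exists2 g : T -> R, mu.-integrable D (fun x => (g x)%:E) &
    forall s x, I s -> `|s - t| < e -> D x ->
      `|(Phi s x - expect mu D (rho s) (Phi s)) * Rt rho s x * Num.sqrt (rhos x)|
        <= g x.
Hypothesis rho_neq_rhos : forall t, I t -> ~ {ae mu, forall x, D x -> rho t x = rhos x}.

Local Notation Rstar x := (Num.sqrt (rhos x)).

Definition mean s := expect mu D (rho s) (Phi s).

Definition overlap s := \int[mu]_(x in D) (Rt rho s x * Rstar x).

Lemma rho_gt0 s x : I s -> D x -> 0 < rho s x.
Proof. by move=> Is Dx; case: (rho_density Is) => _ rho_pos _ _; exact: rho_pos. Qed.

Lemma rhos_gt0 x : D x -> 0 < rhos x.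
Proof. by move=> Dx; case: rhos_density => _ rhos_pos _ _; exact: rhos_pos. Qed.

Lemma integrable_rho s : I s -> mu.-integrable D (EFin \o rho s).
Proof. by case/rho_density. Qed.

Lemma integrable_rhos : mu.-integrable D (EFin \o rhos).
Proof. by case: rhos_density. Qed.

Lemma Rt_gt0 s x : I s -> D x -> 0 < Rt rho s x.
Proof. by move=> Is Dx; rewrite sqrtr_gt0 rho_gt0. Qed.

Lemma sqr_Rt s x : I s -> D x -> Rt rho s x ^+ 2 = rho s x.
Proof. by move=> Is Dx; rewrite sqr_sqrtr // ltW // rho_gt0. Qed.

Lemma sqr_Rstar x : D x -> Rstar x ^+ 2 = rhos x.
Proof. by move=> Dx; rewrite sqr_sqrtr // ltW // rhos_gt0. Qed.

Lemma measurable_rho s : I s -> measurable_fun D (rho s).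
Proof. by case/rho_density. Qed.

Lemma measurable_rhos : measurable_fun D rhos.
Proof. by case: rhos_density. Qed.

Lemma measurable_Rt s : I s -> measurable_fun D (Rt rho s).
Proof. by move=> Is; exact/measurable_fun_sqrt/measurable_rho. Qed.

Lemma measurable_Rstar : measurable_fun D (fun x => Rstar x).
Proof. exact/measurable_fun_sqrt/measurable_rhos. Qed.

Lemma Rt_Rstar_le s x : I s -> D x -> Rt rho s x * Rstar x <= rho s x + rhos x.
Proof. by move=> Is Dx; apply: sqrt_mul_le_add; rewrite ltW ?rho_gt0 ?rhos_gt0. Qed.

Lemma integrable_overlap s : I s ->
  mu.-integrable D (EFin \o (fun x => Rt rho s x * Rstar x)).
Proof.
move=> Is; apply: (le_integrable mD (g := (EFin \o rho s) \+ (EFin \o rhos))).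
- exact/measurable_EFinP/(measurable_funM (measurable_Rt Is) measurable_Rstar).
- move=> x Dx /=.
  have sum_ge0 : 0 <= rho s x + rhos x by rewrite addr_ge0 ?ltW ?rho_gt0 ?rhos_gt0.
  rewrite lee_fin (ger0_norm sum_ge0) ger0_norm ?mulr_ge0 ?sqrtr_ge0 //.
  exact: Rt_Rstar_le.
- exact: integrableD (integrable_rho Is) integrable_rhos.
Qed.

Lemma is_derive_Rt s x : I s -> D x ->
  is_derive s 1 (fun u => Rt rho u x) ((Phi s x - mean s) * Rt rho s x / 2).
Proof.
move=> Is Dx; have rho_pos := rho_gt0 Is Dx.
have dsqrt_rho := is_derive1_comp (is_derive1_sqrt rho_pos) (rho_flow Is Dx).
apply: (is_derive_eq dsqrt_rho).
have rho_sqr : rho s x = Rt rho s x ^+ 2 by rewrite sqr_Rt.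
rewrite /mean {2}rho_sqr /Rt.
by field; rewrite gt_eqF // sqrtr_gt0.
Qed.

Section fixed_time.
Variable t : R.
Hypothesis It : I t.

Local Notation r x := (Rt rho t x).
Local Notation F x := (Phi t x - mean t).
Local Notation H := (Hang mu D rho rhos t).
Local Notation K := (2 * H / sin H).

(* Every integrand below is bounded by a multiple of [envelope], which is
   integrable by the hypotheses on [Phi^2 rho] and [Phi^2 rho^*]. *)
Definition envelope x := (1 + Phi t x ^+ 2) * (rho t x + rhos x).

Definition dominated (f : T -> R) :=
  measurable_fun D f /\ exists C : R, forall x, D x -> `|f x| <= C * envelope x.

Definition weight (w : T -> R) :=
  measurable_fun D w /\ forall x, D x -> 0 <= w x <= rho t x + rhos x.

Lemma integrable_envelope : mu.-integrable D (EFin \o envelope).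
Proof.
apply: (le_integrable mD (g := (((EFin \o rho t) \+ (EFin \o rhos))
  \+ (fun x => ((Phi t x) ^+ 2 * rho t x)%:E))
  \+ (fun x => ((Phi t x) ^+ 2 * rhos x)%:E))).
- apply/measurable_EFinP/measurable_funM.
    exact: measurable_funD (measurable_cst _) (measurable_funX _ (mPhi It)).
  exact: measurable_funD (measurable_rho It) measurable_rhos.
- move=> x Dx /=; rewrite lee_fin le_eqVlt; apply/orP; left; apply/eqP.
  by congr `|_|; rewrite /envelope; ring.
- apply: integrableD => //; last exact: Phi2_rhos_int.
  apply: integrableD => //; last exact: Phi2_rho_int.
  exact: integrableD (integrable_rho It) integrable_rhos.
Qed.

Lemma integrable_dominated (f : T -> R) : dominated f -> mu.-integrable D (EFin \o f).
Proof.
case=> mf [C f_le].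
apply: (le_integrable mD (g := fun x => (C%:E * (EFin \o envelope) x)%E)).
- exact/measurable_EFinP.
- by move=> x Dx /=; rewrite lee_fin (le_trans (f_le x Dx)) ?ler_norm.
- exact: integrableZl integrable_envelope.
Qed.

Lemma dominatedD (f g : T -> R) : dominated f -> dominated g -> dominated (fun x => f x + g x).
Proof.
move=> [mf [C1 f_le]] [mg [C2 g_le]]; split; first exact: measurable_funD.
exists (C1 + C2) => x Dx; apply: le_trans (ler_normD _ _) _.
by rewrite mulrDl lerD ?f_le ?g_le.
Qed.

Lemma dominatedZ (k : R) (f : T -> R) : dominated f -> dominated (fun x => k * f x).
Proof.
move=> [mf [C f_le]]; split; first exact: measurable_funM (measurable_cst _) mf.
by exists (`|k| * C) => x Dx; rewrite normrM -mulrA ler_wpM2l ?f_le.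
Qed.

Lemma Rintegral_domD (f g : T -> R) : dominated f -> dominated g ->
  \int[mu]_(x in D) (f x + g x) = \int[mu]_(x in D) f x + \int[mu]_(x in D) g x.
Proof. by move=> /integrable_dominated f_int /integrable_dominated; exact: RintegralD. Qed.

Lemma Rintegral_domZ (k : R) (f : T -> R) : dominated f ->
  \int[mu]_(x in D) (k * f x) = k * \int[mu]_(x in D) f x.
Proof. by move=> /integrable_dominated; exact: RintegralZl. Qed.

Lemma dominated_weighted (w f : T -> R) (C : R) : weight w -> measurable_fun D f ->
    (forall x, D x -> `|f x| <= C * (1 + Phi t x ^+ 2)) ->
  dominated (fun x => w x * f x).
Proof.
move=> [mw w_bnd] mf f_le; split; first exact: measurable_funM.
exists C => x Dx; have /andP[w_ge0 w_le] := w_bnd x Dx.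
rewrite normrM (ger0_norm w_ge0).
rewrite (_ : C * _ = (rho t x + rhos x) * (C * (1 + Phi t x ^+ 2))).
  exact: ler_pM w_ge0 (normr_ge0 _) w_le (f_le x Dx).
by rewrite /envelope; ring.
Qed.

Lemma weight_RR : weight (fun x => r x ^+ 2).
Proof.
split; first exact: measurable_funX (measurable_Rt It).
by move=> x Dx; rewrite sqr_Rt // ltW ?rho_gt0 //= lerDl ltW ?rhos_gt0.
Qed.

Lemma weight_RS : weight (fun x => r x * Rstar x).
Proof.
split; first exact: measurable_funM (measurable_Rt It) measurable_Rstar.
by move=> x Dx; rewrite Rt_Rstar_le // mulr_ge0 ?sqrtr_ge0.
Qed.

Lemma weight_SS : weight (fun x => Rstar x ^+ 2).
Proof.
split; first exact: measurable_funX measurable_Rstar.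
by move=> x Dx; rewrite sqr_Rstar // ltW ?rhos_gt0 //= lerDr ltW ?rho_gt0.
Qed.

Lemma measurable_F : measurable_fun D (fun x => F x).
Proof. exact: measurable_funB (mPhi It) (measurable_cst _). Qed.

Lemma dominated_w (w : T -> R) : weight w -> dominated w.
Proof.
move=> ww; have -> : w = (fun x => w x * 1) by apply/funext => x; rewrite mulr1.
apply: (dominated_weighted (C := 1) ww (measurable_cst _)) => x _.
by rewrite normr1 mul1r lerDl sqr_ge0.
Qed.

Lemma dominated_wF (w : T -> R) : weight w -> dominated (fun x => w x * F x).
Proof.
move=> ww; apply: (dominated_weighted (C := 2 + 2 * mean t ^+ 2) ww measurable_F).
by move=> x _; apply: le_trans (normr_le_1Dsqr _) (ler_1DsqrB _ _).
Qed.

Lemma dominated_wF2 (w : T -> R) : weight w -> dominated (fun x => w x * F x ^+ 2).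
Proof.
move=> ww; apply: (dominated_weighted (C := 2 + 2 * mean t ^+ 2) ww).
  exact: measurable_funX measurable_F.
move=> x _; apply: le_trans _ (ler_1DsqrB (Phi t x) (mean t)).
by rewrite ger0_norm ?sqr_ge0 // lerDr.
Qed.

Lemma dominated_wPhi (w : T -> R) : weight w -> dominated (fun x => w x * Phi t x).
Proof.
move=> ww; apply: (dominated_weighted (C := 1) ww (mPhi It)) => x _.
by rewrite mul1r normr_le_1Dsqr.
Qed.

Ltac dominated := solve [repeat first
  [ apply: dominatedD | apply: dominatedZ
  | apply: dominated_wF2 | apply: dominated_wF | apply: dominated_wPhi
  | apply: dominated_w
  | exact: weight_RR | exact: weight_RS | exact: weight_SS ]].

Ltac Rintegral_expand :=
  rewrite ?Rintegral_domD; try dominated; rewrite ?Rintegral_domZ; try dominated.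

Lemma Rintegral_sqr_Rt : \int[mu]_(x in D) (r x ^+ 2) = 1.
Proof.
have [_ _ _ <-] := rho_density It.
by apply: eq_Rintegral => x /[!inE] Dx; rewrite sqr_Rt.
Qed.

Lemma Rintegral_sqr_Rstar : \int[mu]_(x in D) (Rstar x ^+ 2) = 1.
Proof.
have [_ _ _ <-] := rhos_density.
by apply: eq_Rintegral => x /[!inE] Dx; rewrite sqr_Rstar.
Qed.

Lemma Rintegral_sqr_Rt_Phi : \int[mu]_(x in D) (r x ^+ 2 * Phi t x) = mean t.
Proof. by apply: eq_Rintegral => x /[!inE] Dx; rewrite sqr_Rt // mulrC. Qed.

Lemma Rintegral_sqr_Rt_F : \int[mu]_(x in D) (r x ^+ 2 * F x) = 0.
Proof.
transitivity (\int[mu]_(x in D) (r x ^+ 2 * Phi t x + (- mean t) * r x ^+ 2)).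
  by apply: eq_Rintegral => x _; ring.
Rintegral_expand.
by rewrite Rintegral_sqr_Rt_Phi Rintegral_sqr_Rt; ring.
Qed.

Lemma Rintegral_sqr_Rt_sub_Rstar :
  \int[mu]_(x in D) ((r x - Rstar x) ^+ 2) = 2 - 2 * overlap t.
Proof.
transitivity (\int[mu]_(x in D) (r x ^+ 2 + ((-2) * (r x * Rstar x) + Rstar x ^+ 2))).
  by apply: eq_Rintegral => x _; ring.
Rintegral_expand.
by rewrite Rintegral_sqr_Rt Rintegral_sqr_Rstar /overlap; ring.
Qed.

Lemma overlap_ge0 : 0 <= overlap t.
Proof.
apply: Rintegral_ge0 => x Dx.
by rewrite mulr_ge0 ?sqrtr_ge0 // ltW ?Rt_gt0.
Qed.

Lemma overlap_lt1 : overlap t < 1.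
Proof.
rewrite ltNge; apply/negP => overlap_ge1; apply: (rho_neq_rhos It).
have sqr_dom : dominated (fun x => (r x - Rstar x) ^+ 2).
  rewrite (_ : (fun x => _) = fun x => r x ^+ 2 + ((-2) * (r x * Rstar x) + Rstar x ^+ 2)).
    by dominated.
  by apply/funext => x; ring.
have sqr_int0 : \int[mu]_(x in D) ((r x - Rstar x) ^+ 2) = 0.
  apply/eqP; rewrite eq_le [X in X <= 0]Rintegral_sqr_Rt_sub_Rstar.
  apply/andP; split; first lra.
  by apply: Rintegral_ge0 => x _; exact: sqr_ge0.
have sqr_ge0' x : D x -> 0 <= (r x - Rstar x) ^+ 2 by move=> _; exact: sqr_ge0.
apply: filterS (Rintegral_ge0_eq0 mD (integrable_dominated sqr_dom) sqr_ge0' sqr_int0).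
move=> x /= sqr0 Dx; move: (sqr0 Dx) => /eqP.
rewrite sqrf_eq0 subr_eq0 => /eqP r_eq.
by rewrite -sqr_Rt // r_eq sqr_Rstar.
Qed.

Lemma overlap_itv : -1 < overlap t < 1.
Proof. by rewrite overlap_lt1 andbT (lt_le_trans _ overlap_ge0) // ltrN10. Qed.

Lemma cos_Hang : cos H = overlap t.
Proof.
have /andP[c_gtN1 c_lt1] := overlap_itv.
by rewrite /Hang -/(overlap t) acosK // in_itv /= !ltW.
Qed.

Lemma Hang_itv : 0 <= H <= pi.
Proof.
have /andP[c_gtN1 c_lt1] := overlap_itv.
by rewrite /Hang acos_ge0 ?acos_lepi // !ltW.
Qed.

Lemma sin_Hang : sin H = Num.sqrt (1 - overlap t ^+ 2).
Proof.
have /andP[c_gtN1 c_lt1] := overlap_itv.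
by rewrite /Hang -/(overlap t) sin_acos // !ltW.
Qed.

Lemma sin_Hang_gt0 : 0 < sin H.
Proof.
rewrite sin_Hang sqrtr_gt0 subr_gt0 expr2.
have := overlap_ge0; have := overlap_lt1; nra.
Qed.

Lemma sin_Hang_neq0 : sin H != 0.
Proof. by rewrite gt_eqF // sin_Hang_gt0. Qed.

Lemma Rt_neq0 x : D x -> r x != 0.
Proof. by move=> Dx; rewrite gt_eqF // Rt_gt0. Qed.

Lemma Rintegral_Rt_Rstar : \int[mu]_(x in D) (r x * Rstar x) = cos H.
Proof. by rewrite cos_Hang. Qed.

Local Notation mRSF := (\int[mu]_(x in D) (r x * Rstar x * F x)).
Local Notation mRRF2 := (\int[mu]_(x in D) (r x ^+ 2 * F x ^+ 2)).
Local Notation mRSF2 := (\int[mu]_(x in D) (r x * Rstar x * F x ^+ 2)).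
Local Notation mSSF := (\int[mu]_(x in D) (Rstar x ^+ 2 * F x)).

Lemma is_derive_overlap : is_derive t 1 overlap (mRSF / 2).
Proof.
have [e e_gt0 [g g_int g_dom]] := overlap_flow_dominated It.
have [del del_gt0 del_sub] := open_itv_subset oI It e_gt0.
pose f s x := Rt rho s x * Rstar x.
have df s x : I s -> D x ->
    is_derive s 1 (f ^~ x) ((Phi s x - mean s) * Rt rho s x / 2 * Rstar x).
  move=> Is Dx; have dRt := is_derive_Rt Is Dx.
  by apply: is_derive_eq; rewrite /GRing.scale /=; ring.
have t_in : `](t - del), (t + del)[%classic t.
  by rewrite /= in_itv /=; apply/andP; split; lra.
have f_int s : `](t - del), (t + del)[%classic s -> mu.-integrable D (EFin \o f s).
  by case/del_sub => Is _; exact: integrable_overlap.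
have f_der s x : `](t - del), (t + del)[%classic s -> D x -> derivable (f ^~ x) s 1.
  by case/del_sub => Is _ Dx; exact: (@ex_derive _ _ _ _ _ _ _ (df s x Is Dx)).
have g_ub s x : `](t - del), (t + del)[%classic s -> D x ->
    `|partial1of2 f s x| <= `|g x|.
  case/del_sub => Is st Dx; have := g_dom s x Is st Dx.
  rewrite partial1of2E (@derive_val _ _ _ _ _ _ _ (df s x Is Dx)) /mean.
  set z := (_ - _) * _ * _ => z_le.
  rewrite (_ : _ * _ = z / 2); last by rewrite /z; ring.
  rewrite normrM (ger0_norm (_ : 0 <= 2^-1)) ?invr_ge0 ?ler0n //.
  have := normr_ge0 z; have := ler_norm (g x); lra.
have absg_int := integrable_abse g_int.
have absg_ge0 x : 0 <= `|g x| by exact: normr_ge0.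
have dint :=
  derivable_under_integral mD t_in f_int f_der absg_ge0 absg_int g_ub.
apply: (is_derive_eq (derivableP dint)).
rewrite -derive1E
  (differentiation_under_integral mD t_in f_int f_der absg_ge0 absg_int g_ub).
rewrite [RHS]mulrC -Rintegral_domZ; last by dominated.
apply: eq_Rintegral => x /[!inE] Dx.
by rewrite partial1of2E (@derive_val _ _ _ _ _ _ _ (df t x It Dx)); ring.
Qed.

Definition dHang := - (sin H)^-1 * (mRSF / 2).

Definition dK := 2 * dHang / sin H - 2 * H * cos H * dHang / sin H ^+ 2.

Definition dTfun x :=
  dK * ((Rstar x - r x * cos H) / r x) + K * (sin H * dHang - Rstar x * F x / (2 * r x)).

Lemma is_derive_Hang : is_derive t 1 (fun s => Hang mu D rho rhos s) dHang.
Proof.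
have dacos := is_derive1_comp (is_derive1_acos overlap_itv) is_derive_overlap.
by apply: (is_derive_eq dacos); rewrite /dHang sin_Hang.
Qed.

Lemma is_derive_Tfun x : D x ->
  is_derive t 1 (fun s => Tfun mu D rho rhos s x) (dTfun x).
Proof.
move=> Dx; have dT := is_derive_logmap (Rstar x) is_derive_Hang
  (is_derive_Rt It Dx) sin_Hang_neq0 (Rt_neq0 Dx).
apply: (is_derive_eq dT); rewrite /dTfun /dK.
by field; rewrite sin_Hang_neq0 Rt_neq0.
Qed.

Lemma derive1_Tfun x : D x -> derive1 (fun s => Tfun mu D rho rhos s x) t = dTfun x.
Proof.
by move=> Dx; rewrite derive1E (@derive_val _ _ _ _ _ _ _ (is_derive_Tfun Dx)).
Qed.

Lemma Tfun_at x : Tfun mu D rho rhos t x = K * ((Rstar x - r x * cos H) / r x).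
Proof. by []. Qed.

Lemma Fcent_mean x : Fcent mu D rho t (Phi t) x = F x.
Proof.
rewrite /Fcent /mean /expect; congr (_ - _).
by apply: eq_Rintegral => y /[!inE] Dy; rewrite sqr_Rt.
Qed.

Lemma Rintegral_dTfun_F :
  \int[mu]_(x in D) (derive1 (fun s => Tfun mu D rho rhos s x) t
                      * Fcent mu D rho t (Phi t) x * r x ^+ 2)
  = dK * mRSF - K / 2 * mRSF2.
Proof.
transitivity (\int[mu]_(x in D) (dK * (r x * Rstar x * F x)
  + ((- dK * cos H) * (r x ^+ 2 * F x) + ((K * sin H * dHang) * (r x ^+ 2 * F x)
  + (- K / 2) * (r x * Rstar x * F x ^+ 2))))).
  apply: eq_Rintegral => x /[!inE] Dx; rewrite derive1_Tfun // Fcent_mean /dTfun.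
  by field; rewrite sin_Hang_neq0 Rt_neq0.
Rintegral_expand.
by rewrite Rintegral_sqr_Rt_F; ring.
Qed.

Lemma Rintegral_Tfun_F2 :
  \int[mu]_(x in D) (Tfun mu D rho rhos t x * (Fcent mu D rho t (Phi t) x) ^+ 2
                      * r x ^+ 2)
  = K * mRSF2 - K * cos H * mRRF2.
Proof.
transitivity (\int[mu]_(x in D) (K * (r x * Rstar x * F x ^+ 2)
  + (- K * cos H) * (r x ^+ 2 * F x ^+ 2))).
  apply: eq_Rintegral => x /[!inE] Dx; rewrite Tfun_at Fcent_mean.
  by field; rewrite sin_Hang_neq0 Rt_neq0.
Rintegral_expand.
by ring.
Qed.

Lemma Rintegral_F2 :
  \int[mu]_(x in D) ((Fcent mu D rho t (Phi t) x) ^+ 2 * r x ^+ 2) = mRRF2.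
Proof. by apply: eq_Rintegral => x _; rewrite Fcent_mean mulrC. Qed.

Lemma Rintegral_dTfun_Tfun :
  \int[mu]_(x in D) (derive1 (fun s => Tfun mu D rho rhos s x) t
                      * Tfun mu D rho rhos t x * r x ^+ 2)
  = dK * K * sin H ^+ 2 - K ^+ 2 / 2 * mSSF + K ^+ 2 * cos H / 2 * mRSF.
Proof.
transitivity (\int[mu]_(x in D) (dK * K * (Rstar x ^+ 2)
  + ((- 2 * dK * K * cos H) * (r x * Rstar x)
  + ((dK * K * cos H ^+ 2) * (r x ^+ 2)
  + ((K ^+ 2 * sin H * dHang) * (r x * Rstar x)
  + ((- K ^+ 2 * sin H * dHang * cos H) * (r x ^+ 2)
  + ((- K ^+ 2 / 2) * (Rstar x ^+ 2 * F x)
  + (K ^+ 2 * cos H / 2) * (r x * Rstar x * F x)))))))).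
  apply: eq_Rintegral => x /[!inE] Dx; rewrite derive1_Tfun // Tfun_at /dTfun.
  by field; rewrite sin_Hang_neq0 Rt_neq0.
Rintegral_expand.
by rewrite Rintegral_sqr_Rt Rintegral_sqr_Rstar Rintegral_Rt_Rstar sin2cos2; ring.
Qed.

Lemma Rintegral_Tfun_Phi :
  \int[mu]_(x in D) (Tfun mu D rho rhos t x * Phi t x * r x ^+ 2) = K * mRSF.
Proof.
transitivity (\int[mu]_(x in D) (K * (r x * Rstar x * F x)
  + ((K * mean t) * (r x * Rstar x) + (- K * cos H) * (r x ^+ 2 * Phi t x)))).
  apply: eq_Rintegral => x /[!inE] Dx; rewrite Tfun_at.
  by field; rewrite sin_Hang_neq0 Rt_neq0.
Rintegral_expand.
by rewrite Rintegral_Rt_Rstar Rintegral_sqr_Rt_Phi; ring.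
Qed.

Lemma Rintegral_Tfun2_F :
  \int[mu]_(x in D) (Tfun mu D rho rhos t x ^+ 2 * Fcent mu D rho t (Phi t) x
                      * r x ^+ 2)
  = K ^+ 2 * mSSF - 2 * cos H * K ^+ 2 * mRSF.
Proof.
transitivity (\int[mu]_(x in D) (K ^+ 2 * (Rstar x ^+ 2 * F x)
  + ((- 2 * cos H * K ^+ 2) * (r x * Rstar x * F x)
  + (cos H ^+ 2 * K ^+ 2) * (r x ^+ 2 * F x)))).
  apply: eq_Rintegral => x /[!inE] Dx; rewrite Tfun_at Fcent_mean.
  by field; rewrite sin_Hang_neq0 Rt_neq0.
Rintegral_expand.
by rewrite Rintegral_sqr_Rt_F; ring.
Qed.

(* Cauchy-Schwarz for [R F] and [R^* - R cos H], whose squared norm is [sin^2 H]. *)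
Lemma sqr_mRSF_le : mRSF ^+ 2 <= mRRF2 * sin H ^+ 2.
Proof.
apply: quadratic_ge0_discriminant => [|l].
  by apply: Rintegral_ge0 => x _; rewrite mulr_ge0 ?sqr_ge0.
have -> : l ^+ 2 * mRRF2 - 2 * l * mRSF + sin H ^+ 2
    = \int[mu]_(x in D) ((l * r x * F x - (Rstar x - cos H * r x)) ^+ 2).
  symmetry; transitivity (\int[mu]_(x in D) (l ^+ 2 * (r x ^+ 2 * F x ^+ 2)
    + ((- 2 * l) * (r x * Rstar x * F x) + ((2 * l * cos H) * (r x ^+ 2 * F x)
    + (1 * (Rstar x ^+ 2) + ((- 2 * cos H) * (r x * Rstar x)
    + (cos H ^+ 2) * (r x ^+ 2))))))).
    by apply: eq_Rintegral => x _; ring.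
  Rintegral_expand.
  rewrite Rintegral_sqr_Rt_F Rintegral_sqr_Rt Rintegral_sqr_Rstar Rintegral_Rt_Rstar.
  by rewrite sin2cos2; ring.
by apply: Rintegral_ge0 => x _; exact: sqr_ge0.
Qed.

Lemma logmap_derivative_bound :
  (\int[mu]_(x in D) (derive1 (fun s => Tfun mu D rho rhos s x) t
                       * Fcent mu D rho t (Phi t) x * r x ^+ 2))
  + 2^-1 * (\int[mu]_(x in D) (Tfun mu D rho rhos t x
                       * (Fcent mu D rho t (Phi t) x) ^+ 2 * r x ^+ 2))
  >= - (\int[mu]_(x in D) ((Fcent mu D rho t (Phi t) x) ^+ 2 * r x ^+ 2)).
Proof.
rewrite Rintegral_dTfun_F Rintegral_Tfun_F2 Rintegral_F2 -subr_ge0.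
have -> : dK * mRSF - K / 2 * mRSF2 + 2^-1 * (K * mRSF2 - K * cos H * mRRF2) - - mRRF2
    = (sin H - H * cos H) * (mRRF2 * sin H ^+ 2 - mRSF ^+ 2) / sin H ^+ 3.
  by rewrite /dK /dHang; field; rewrite sin_Hang_neq0.
apply: divr_ge0; last by rewrite exprn_ge0 // ltW // sin_Hang_gt0.
by apply: mulr_ge0; rewrite subr_ge0; [exact: mul_cos_le_sin Hang_itv|exact: sqr_mRSF_le].
Qed.

Lemma logmap_derivative_identity :
  (\int[mu]_(x in D) (derive1 (fun s => Tfun mu D rho rhos s x) t
                       * Tfun mu D rho rhos t x * r x ^+ 2))
  = - (\int[mu]_(x in D) (Tfun mu D rho rhos t x * Phi t x * r x ^+ 2))
    - 2^-1 * (\int[mu]_(x in D) (Tfun mu D rho rhos t x ^+ 2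
                       * Fcent mu D rho t (Phi t) x * r x ^+ 2)).
Proof.
rewrite Rintegral_dTfun_Tfun Rintegral_Tfun_Phi Rintegral_Tfun2_F /dK /dHang.
by field; rewrite sin_Hang_neq0.
Qed.

End fixed_time.
End density_path.

Theorem lemma4 (d : measure_display) (T : measurableType d) (R : realType)
  (mu : {measure set T -> \bar R}) (D : set T) (I : set R)
  (rho Phi : R -> T -> R) (rhos : T -> R) :
  measurable D -> open I ->
  (forall t, I t -> pos_density mu D (rho t)) ->
  pos_density mu D rhos ->
  (forall t, I t -> measurable_fun D (Phi t)) ->
  (forall t, I t -> mu.-integrable D (fun x => ((Phi t x) ^+ 2 * rho t x)%:E)) ->
  (forall t, I t -> mu.-integrable D (fun x => ((Phi t x) ^+ 2 * rhos x)%:E)) ->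
  (* d/dt rho_t = (Phi_t - E_{rho_t}[Phi_t]) rho_t, pointwise on D *)
  (forall t x, I t -> D x ->
     is_derive t 1 (fun s => rho s x)
       ((Phi t x - expect mu D (rho t) (Phi t)) * rho t x)) ->
  (* regularity ("smoothness"): local domination of d/dt (R_t R^* ) *)
  (forall t, I t -> exists2 e : R, 0 < e &
     exists2 g : T -> R, mu.-integrable D (fun x => (g x)%:E) &
       forall s x, I s -> `|s - t| < e -> D x ->
         `|(Phi s x - expect mu D (rho s) (Phi s)) * Rt rho s x * Num.sqrt (rhos x)|
           <= g x) ->
  (* rho_t <> rho^* (as elements of L^1, i.e. not a.e. equal) *)
  (forall t, I t -> ~ {ae mu, forall x, D x -> rho t x = rhos x}) ->
  forall t, I t ->
    (\int[mu]_(x in D) (derive1 (fun s => Tfun mu D rho rhos s x) t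
                          * Fcent mu D rho t (Phi t) x * Rt rho t x ^+ 2))
     + 2^-1 * (\int[mu]_(x in D) (Tfun mu D rho rhos t x
                          * (Fcent mu D rho t (Phi t) x) ^+ 2 * Rt rho t x ^+ 2))
     >= - (\int[mu]_(x in D) ((Fcent mu D rho t (Phi t) x) ^+ 2 * Rt rho t x ^+ 2))
    /\
    (\int[mu]_(x in D) (derive1 (fun s => Tfun mu D rho rhos s x) t
                          * Tfun mu D rho rhos t x * Rt rho t x ^+ 2))
     = - (\int[mu]_(x in D) (Tfun mu D rho rhos t x * Phi t x * Rt rho t x ^+ 2))
       - 2^-1 * (\int[mu]_(x in D) (Tfun mu D rho rhos t x ^+ 2
                          * Fcent mu D rho t (Phi t) x * Rt rho t x ^+ 2)).
Proof.
move=> mD oI rho_density rhos_density mPhi Phi2_rho_int Phi2_rhos_int rho_flow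
  overlap_flow_dominated rho_neq_rhos t It.
by split; [apply: logmap_derivative_bound | apply: logmap_derivative_identity].
Qed.
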